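(* Let $k$ be an algebraically closed field, $A$ a finite dimensional $k$-algebra, $P_0,P_1\in\operatorname{proj}A$, and let $G=\operatorname{Aut}_A(P_0)\times\operatorname{Aut}_A(P_1)$ act on $\operatorname{Hom}_A(P_1,P_0)$ by $(a,b)f=afb^{-1}$. If $f,g\in\operatorname{Hom}_A(P_1,P_0)$ and $g$ lies in the Zariski closure of $Gf$, then $\mathcal{T}_f\subseteq\mathcal{T}_g$, $\mathcal{F}_f\subseteq\mathcal{F}_g$, $\overline{\mathcal{T}}_f\supseteq\overline{\mathcal{T}}_g$, $\overline{\mathcal{F}}_f\supseteq\overline{\mathcal{F}}_g$ and $\mathcal{W}_f\supseteq\mathcal{W}_g$.
   Context: For a morphism $f\colon P_1\to P_0$ in $\operatorname{proj}A$, let $\nu=D\operatorname{Hom}_A(-,A)$, $C_f=\operatorname{Cok}f$, $K_{\nu f}=\operatorname{Ker}\nu f$. $\mathcal{T}_f$ is the smallest torsion class of $\operatorname{mod}A$ containing $C_f$; $\overline{\mathcal{T}}_f=\{X\mid\operatorname{Hom}_A(X,K_{\nu f})=0\}$; $\mathcal{F}_f$ is the smallest torsion-free class containing $K_{\nu f}$; $\overline{\mathcal{F}}_f=\{X\mid\operatorname{Hom}_A(C_f,X)=0\}$; $\mathcal{W}_f=\overline{\mathcal{T}}_f\cap\overline{\mathcal{F}}_f$. *)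

From HB Require Import structures.
From mathcomp Require Import all_boot all_order all_algebra all_field.
From mathcomp Require Import mpoly.

Set Implicit Arguments.
Unset Strict Implicit.
Unset Printing Implicit Defensive.

Import GRing.Theory.
Local Open Scope ring_scope.

Section ModDefs.
Variables (k : fieldType) (A : falgType k).

Record fmod := FMod {
  fcar :> vectType k;
  fact : fcar -> A -> fcar;
  fact_linl : forall a c x y, fact (c *: x + y) a = c *: fact x a + fact y a;
  fact_linr : forall x c a b, fact x (c *: a + b) = c *: fact x a + fact x b;
  fact1 : forall x, fact x 1 = x;
  factM : forall x a b, fact x (a * b) = fact (fact x a) b }.

Definition is_hom (X Y : fmod) (h : X -> Y) : Prop :=
  (forall c x y, h (c *: x + y) = c *: h x + h y) /\
  (forall x a, h (fact x a) = fact (h x) a).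

Definition surj (X Y : Type) (h : X -> Y) : Prop := forall y, exists x, h x = y.

Definition hom_zero (X Y : fmod) : Prop :=
  forall h : X -> Y, is_hom h -> forall x, h x = 0.

Definition short_exact (X Y Z : fmod) (i : X -> Y) (p : Y -> Z) : Prop :=
  [/\ is_hom i, is_hom p, injective i, surj p &
      forall y, p y = 0 <-> exists x, i x = y].

Definition ext_closed (T : fmod -> Prop) : Prop :=
  forall (X Y Z : fmod) (i : X -> Y) (p : Y -> Z),
    short_exact i p -> T X -> T Z -> T Y.

Definition torsion_class (T : fmod -> Prop) : Prop :=
  (forall (X Y : fmod) (h : X -> Y), T X -> is_hom h -> surj h -> T Y) /\
  ext_closed T.

Definition torsionfree_class (F : fmod -> Prop) : Prop :=
  (forall (X Y : fmod) (h : Y -> X), F X -> is_hom h -> injective h -> F Y) /\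
  ext_closed F.

Definition projective (P : fmod) : Prop :=
  forall (X Y : fmod) (p : X -> Y) (h : P -> Y),
    is_hom p -> surj p -> is_hom h ->
    exists h' : P -> X, is_hom h' /\ forall x, p (h' x) = h x.

Definition is_aut (P : fmod) (a a' : P -> P) : Prop :=
  [/\ is_hom a, is_hom a', cancel a a' & cancel a' a].

Definition aut_orbit (P0 P1 : fmod) (f : P1 -> P0) (h : P1 -> P0) : Prop :=
  exists (a a' : P0 -> P0) (b b' : P1 -> P1),
    [/\ is_aut a a', is_aut b b' & forall x, h x = a (f (b' x))].

Definition hom_mx (X Y : fmod) (h : X -> Y) :
    'M[k]_(\dim {:X}, \dim {:Y}) :=
  \matrix_(i, j) coord (vbasis {:Y}) j (h (tnth (vbasis {:X}) i)).

Definition hom_coords (X Y : fmod) (h : X -> Y) :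
    'I_(\dim {:X} * \dim {:Y}) -> k :=
  fun i => mxvec (hom_mx h) 0 i.

Definition zariski_closure (X Y : fmod) (S : (X -> Y) -> Prop) (g : X -> Y) : Prop :=
  forall p : {mpoly k[\dim {:X} * \dim {:Y}]},
    (forall h, S h -> p.@[hom_coords h] = 0) -> p.@[hom_coords g] = 0.

Definition is_cok (P0 P1 : fmod) (f : P1 -> P0) (C : fmod) : Prop :=
  exists pi : P0 -> C,
    [/\ is_hom pi, surj pi & forall y, pi y = 0 <-> exists x, f x = y].

Definition homA (P : fmod) (phi : P -> A) : Prop :=
  (forall c x y, phi (c *: x + y) = c *: phi x + phi y) /\
  (forall x a, phi (fact x a) = phi x * a).

(* N together with pair is (isomorphic to) nu P = D Hom_A(P, A):
   n |-> pair n - is an isomorphism of right A-modules from N onto the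
   k-dual of the left A-module Hom_A(P,A), where (a.phi)(x) = a * phi x
   and (xi.a)(phi) = xi(a.phi). *)
Definition nakayama_dual (P N : fmod) (pair : N -> (P -> A) -> k) : Prop :=
  [/\ (forall c n m phi, homA phi -> pair (c *: n + m) phi = c * pair n phi + pair m phi),
      (forall n c phi psi, homA phi -> homA psi ->
          pair n (fun x => c *: phi x + psi x) = c * pair n phi + pair n psi),
      (forall n a phi, homA phi -> pair (fact n a) phi = pair n (fun x => a * phi x)),
      (forall n, (forall phi, homA phi -> pair n phi = 0) -> n = 0) &
      (forall xi : (P -> A) -> k,
          (forall c phi psi, homA phi -> homA psi ->
             xi (fun x => c *: phi x + psi x) = c * xi phi + xi psi) ->
          exists n, forall phi, homA phi -> pair n phi = xi phi)].

(* K is (isomorphic to) Ker (nu f), where nu f : nu P1 -> nu P0 = D Hom_A(P0,A)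
   is D Hom_A(f, A), i.e. (nu f)(n) = (phi |-> pair n (phi o f)). *)
Definition is_Knu (P0 P1 : fmod) (f : P1 -> P0) (K : fmod) : Prop :=
  exists (N : fmod) (pair : N -> (P1 -> A) -> k) (iota : K -> N),
    [/\ nakayama_dual pair, is_hom iota, injective iota &
        forall n, (exists x, iota x = n) <->
          (forall phi : P0 -> A, homA phi -> pair n (fun x => phi (f x)) = 0)].

Definition Tf (P0 P1 : fmod) (f : P1 -> P0) (X : fmod) : Prop :=
  forall T, torsion_class T -> (forall C, is_cok f C -> T C) -> T X.

Definition Ff (P0 P1 : fmod) (f : P1 -> P0) (X : fmod) : Prop :=
  forall F, torsionfree_class F -> (forall K, is_Knu f K -> F K) -> F X.

Definition Tbarf (P0 P1 : fmod) (f : P1 -> P0) (X : fmod) : Prop :=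
  forall K, is_Knu f K -> hom_zero X K.

Definition Fbarf (P0 P1 : fmod) (f : P1 -> P0) (X : fmod) : Prop :=
  forall C, is_cok f C -> hom_zero C X.

Definition Wf (P0 P1 : fmod) (f : P1 -> P0) (X : fmod) : Prop :=
  Tbarf f X /\ Fbarf f X.

End ModDefs.

From HB Require Import structures.
From mathcomp Require Import all_boot all_order all_algebra all_field.
From mathcomp Require Import mpoly.
From Stdlib Require Import ClassicalEpsilon FunctionalExtensionality.

Set Implicit Arguments.
Unset Strict Implicit.
Unset Printing Implicit Defensive.

Import GRing.Theory.
Local Open Scope ring_scope.

(* Fix an A-module X.  Hom_A(C_h, X) = 0 says that u |-> u o h is injective on
   Hom_A(P0, X), and Hom_A(X, K_{nu h}) = 0 says that u |-> (nu h) o u is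
   injective on Hom_A(X, nu P1).  Both maps depend linearly on h, so on the
   coordinates of h injectivity is the non-vanishing of some maximal minor: an
   open condition.  It is also constant along the orbit G f, so if it holds at a
   point g of the closure of G f it holds at f.  This gives the inclusions for
   overline F, overline T and hence W.
   For T: a torsion class T containing C_g contains the largest submodule M of
   C_f lying in T, and Hom_A(Y, C_f / M) = 0 for all Y in T.  So C_f / M lies in
   overline F_g, which is contained in overline F_f; hence the projection
   C_f -> C_f / M vanishes and C_f = M is in T.  The case of F is dual. *)

Definition linear_of (k : fieldType) (U V : lmodType k) (f : U -> V)
    (fL : linear f) : {linear U -> V} :=
  HB.pack f (GRing.isLinear.Build k U V *:%R f fL).

Definition lfun_of (k : fieldType) (U V : vectType k) (f : U -> V)
    (fL : linear f) : 'Hom(U, V) :=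
  linfun (linear_of fL).

Lemma lfun_ofE (k : fieldType) (U V : vectType k) (f : U -> V) (fL : linear f) :
  lfun_of fL =1 f.
Proof. exact: lfunE. Qed.

Definition scalar_of (k : fieldType) (U : lmodType k) (f : U -> k)
    (fL : scalar f) : {scalar U} :=
  HB.pack f (GRing.isLinear.Build k U k *%R f fL).

Lemma scalar_sum (k : fieldType) (U : lmodType k) (f : U -> k) : scalar f ->
  forall I r (P : pred I) (c : I -> k) (F : I -> U),
  f (\sum_(i <- r | P i) c i *: F i) = \sum_(i <- r | P i) c i * f (F i).
Proof.
move=> fL I r P c F; have /= -> := linear_sum (scalar_of fL).
by apply: eq_bigr => i _; apply: (scalarZ (scalar_of fL)).
Qed.

Section ExtremalDim.
Variables (k : fieldType) (V : vectType k) (P : {vspace V} -> Prop).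

Let has_dim (d : nat) : bool :=
  if excluded_middle_informative (exists2 U, P U & \dim U = d) then true else false.

Let has_dimP (d : nat) : reflect (exists2 U, P U & \dim U = d) (has_dim d).
Proof. by rewrite /has_dim; case: excluded_middle_informative => H; constructor. Qed.

Lemma ex_max_dim U0 : P U0 ->
  exists2 U, P U & forall U', P U' -> (\dim U' <= \dim U)%N.
Proof.
move=> PU0; have exd : exists d, has_dim d by exists (\dim U0); apply/has_dimP; exists U0.
have ubd d : has_dim d -> (d <= \dim {:V})%N.
  by move=> /has_dimP[U _ <-]; apply/dimvS/subvf.
have [d /has_dimP[U PU <-] maxd] := ex_maxnP exd ubd.
by exists U => // U' PU'; apply/maxd/has_dimP; exists U'.
Qed.

Lemma ex_min_dim U0 : P U0 ->
  exists2 U, P U & forall U', P U' -> (\dim U <= \dim U')%N.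
Proof.
move=> PU0; have exd : exists d, has_dim d by exists (\dim U0); apply/has_dimP; exists U0.
have [d /has_dimP[U PU <-] mind] := ex_minnP exd.
by exists U => // U' PU'; apply/mind/has_dimP; exists U'.
Qed.
End ExtremalDim.

Section VspaceOfPred.
Variables (k : fieldType) (V : vectType k) (P : V -> Prop).
Hypotheses (P0 : P 0) (PL : forall c x y, P x -> P y -> P (c *: x + y)).

Lemma exists_vspace_of_pred : exists U : {vspace V}, forall v, v \in U <-> P v.
Proof.
have P0sub v : v \in (0 : {vspace V})%VS -> P v by rewrite memv0 => /eqP ->.
have [U sUP maxU] := @ex_max_dim _ _ (fun U => forall v, v \in U -> P v) _ P0sub.
exists U => v; split=> [|Pv]; first exact: sUP.
apply/contraT => vNU.
have /maxU : forall w, w \in (U + <[v]>)%VS -> P w.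
  move=> _ /memv_addP[u uU [_ /vlineP[c ->] ->]].
  by rewrite addrC; apply: PL => //; apply: sUP.
rewrite leqNgt (ltn_leqif (dimv_leqif_eq (addvSl U <[v]>))).
rewrite negbK => /eqP UE; move: vNU; rewrite UE.
by rewrite (subvP (addvSr U _) _ (memv_line v)).
Qed.

Definition vspace_of_pred : {vspace V} :=
  proj1_sig (constructive_indefinite_description _ exists_vspace_of_pred).

Lemma mem_vspace_of_pred v : v \in vspace_of_pred <-> P v.
Proof.
exact: (proj2_sig (constructive_indefinite_description _ exists_vspace_of_pred)).
Qed.
End VspaceOfPred.

Section ZariskiRowFree.
Variables (k : fieldType) (n d m : nat) (L : 'rV[k]_n -> 'M[k]_(d, m)).
Hypothesis L_linear : linear L.

Lemma linear_mx_meval :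
  exists Mp : 'M[{mpoly k[n]}]_(d, m),
    forall u : 'rV_n, map_mx (meval (fun i => u 0 i)) Mp = L u.
Proof.
exists (\matrix_(r, t) \sum_i L (delta_mx 0 i) r t *: 'X_i) => u.
apply/matrixP => r t; rewrite !mxE raddf_sum [in RHS](row_sum_delta u).
have /= -> := linear_sum (linear_of L_linear); rewrite summxE.
apply: eq_bigr => i _; have /= -> := linearZ_LR (linear_of L_linear).
by rewrite mevalZ mevalXU mxE mulrC.
Qed.

Lemma not_row_free_closure (T : Type) (S : T -> Prop) (u : T -> 'rV[k]_n) t :
  (forall p : {mpoly k[n]},
     (forall s, S s -> p.@[fun i => u s 0 i] = 0) -> p.@[fun i => u t 0 i] = 0) ->
  (forall s, S s -> ~~ row_free (L (u s))) -> ~~ row_free (L (u t)).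
Proof.
move=> closure notfree; have [Mp MpE] := linear_mx_meval.
set M := fun v => map_mx (meval v) Mp.
have row_free_minor v (s : 'I_d -> 'I_m) :
    row_free (rowsub s (M v)^T) -> row_free (M v).
  move=> free_s; rewrite /row_free eqn_leq rank_leq_row -mxrank_tr.
  by have := mxrankS (rowsub_sub s (M v)^T); rewrite (eqP free_s).
apply/negP; rewrite -MpE -/(M _) => free_t.
have full_t : row_full (M (fun i => u t 0 i))^T by rewrite /row_full mxrank_tr.
(* A maximal minor of Mp that is nonzero at t, but vanishes on S. *)
pose s := fullrankfun full_t; pose p := \det (rowsub s Mp^T).
have pE v : p.@[v] = \det (rowsub s (M v)^T).
  by rewrite /p -det_map_mx; congr (\det _); apply/matrixP => i j; rewrite !mxE.
have := fullrowsub_unit full_t; rewrite unitmxE unitfE -pE closure ?eqxx //.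
move=> s' /notfree; rewrite -MpE -/(M _) pE => notfree_s'.
apply/eqP; rewrite -[_ == 0]negbK -unitfE -unitmxE -row_free_unit.
by apply: contra notfree_s'; apply: row_free_minor.
Qed.
End ZariskiRowFree.

Section RowFreeImage.
Import passmx.
Variables (k : fieldType) (V Y : vectType k) (Psi : V -> Y) (W : {vspace V}).
Hypothesis Psi_linear : linear Psi.
Let b := vbasis W.
Local Notation rV := (rVof (vbasis {:Y})).

Lemma row_free_image_basis :
  row_free (\matrix_(r < \dim W) rV (Psi b`_r)) <->
  {in W, forall w, Psi w = 0 -> w = 0}.
Proof.
set M := \matrix_r _.
have mulM a : a *m M = rV (Psi (\sum_r a 0 r *: b`_r)).
  have /= -> := linear_sum (linear_of Psi_linear).
  rewrite linear_sum mulmx_sum_row; apply: eq_bigr => r _.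
  by have /= -> := linearZ_LR (linear_of Psi_linear); rewrite linearZ rowK.
have combW (a : 'rV_(\dim W)) : \sum_r a 0 r *: b`_r \in W.
  by apply/memv_suml => r _; apply/memvZ/vbasis_mem/mem_nth; rewrite size_tuple.
have comb0 (a : 'rV_(\dim W)) : \sum_r a 0 r *: b`_r = 0 -> a = 0.
  move=> a0; apply/rowP => r; rewrite mxE.
  by move/freeP: (basis_free (vbasisP W)) => /(_ (fun r => a 0 r) a0 r).
split => [freeM w Ww Psiw0 | injW].
  pose a := \row_r coord b r w.
  have /(row_free_inj freeM) a0 : a *m M = 0 *m M.
    rewrite mul0mx mulM; under eq_bigr do rewrite mxE.
    by rewrite -coord_vbasis // Psiw0 linear0.
  rewrite (coord_vbasis Ww) big1 // => r _.
  by have /rowP/(_ r) := a0; rewrite !mxE => ->; rewrite scale0r.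
rewrite -kermx_eq0; apply/contraT; rewrite -nz_row_eq0 => /negPn.
set a := nz_row _; have : a *m M = 0 by apply/sub_kermxP/nz_row_sub.
by rewrite mulM => /eqP; rewrite (rVof_eq0 (vbasisP _)) => /eqP/injW/comb0->.
Qed.
End RowFreeImage.

Section Modules.
Variables (k : fieldType) (A : falgType k).

Section Action.
Variables (X : fmod A) (a : A).

Lemma fmod_act_linear : linear (fun x : X => fact x a).
Proof. exact: fact_linl. Qed.

Lemma fmod_act0 : fact (0 : X) a = 0.
Proof. exact: (linear0 (linear_of fmod_act_linear)). Qed.

Lemma fmod_actB (x y : X) : fact (x - y) a = fact x a - fact y a.
Proof. exact: (linearB (linear_of fmod_act_linear)). Qed.
End Action.

Section Hom.
Variables (X Y : fmod A) (h : X -> Y) (hom_h : is_hom h).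

Lemma hom_linear : linear h. Proof. exact: hom_h.1. Qed.
Lemma hom_fact x a : h (fact x a) = fact (h x) a. Proof. exact: hom_h.2. Qed.

Lemma hom0 : h 0 = 0. Proof. exact: (linear0 (linear_of hom_linear)). Qed.
Lemma homB x y : h (x - y) = h x - h y. Proof. exact: (linearB (linear_of hom_linear)). Qed.
End Hom.

Lemma hom_comp (X Y Z : fmod A) (h : X -> Y) (h' : Y -> Z) :
  is_hom h -> is_hom h' -> is_hom (h' \o h).
Proof.
move=> hom_h hom_h'; split=> [c x y | x a] /=; first by rewrite !hom_linear.
by rewrite !hom_fact.
Qed.

Lemma eq_is_hom (X Y : fmod A) (h h' : X -> Y) : h =1 h' -> is_hom h' -> is_hom h.
Proof. by move=> hh' [lin_h' fact_h']; split=> *; rewrite !hh'. Qed.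

Lemma inj_hom (X Y : fmod A) (h : X -> Y) :
  is_hom h -> (forall x, h x = 0 -> x = 0) -> injective h.
Proof. by move=> hom_h h0 x y hxy; apply/subr0_eq/h0; rewrite homB // hxy subrr. Qed.

Section HomLfun.
Import passmx.
Variables (X Y : fmod A).

Definition hom_lfun (h : X -> Y) : 'Hom(X, Y) :=
  hommx (vbasis {:X}) (vbasis {:Y}) (hom_mx h).

Lemma hom_lfunE (h : X -> Y) : linear h -> hom_lfun h =1 h.
Proof.
move=> lin_h x; pose hL := linear_of lin_h; rewrite /hom_lfun.
have -> : hom_mx h = mxof (vbasis {:X}) (vbasis {:Y}) (linfun hL).
  apply/matrixP => i j; rewrite !mxE /=.
  by rewrite (lfunE hL) /= vecof_delta (tnth_nth 0).
by rewrite mxofK ?vbasisP // lfunE.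
Qed.
End HomLfun.

Definition fact_closed (X : fmod A) (U : {vspace X}) : Prop :=
  forall x a, x \in U -> fact x a \in U.

Section Submodule.
Variables (X : fmod A) (U : {vspace X}) (HU : fact_closed U).

Definition sub_fact (u : subvs_of U) (a : A) : subvs_of U := vsproj U (fact (vsval u) a).

Lemma vsval_sub_fact u a : vsval (sub_fact u a) = fact (vsval u) a.
Proof. by rewrite vsprojK // HU // subvsP. Qed.

Lemma sub_fact_linl a c u v : sub_fact (c *: u + v) a = c *: sub_fact u a + sub_fact v a.
Proof. by apply: subvs_inj; rewrite !linearP /= !vsval_sub_fact linearP fact_linl. Qed.

Lemma sub_fact_linr u c a b : sub_fact u (c *: a + b) = c *: sub_fact u a + sub_fact u b.
Proof. by apply: subvs_inj; rewrite !linearP /= !vsval_sub_fact fact_linr. Qed.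

Lemma sub_fact1 u : sub_fact u 1 = u.
Proof. by apply: subvs_inj; rewrite vsval_sub_fact fact1. Qed.

Lemma sub_factM u a b : sub_fact u (a * b) = sub_fact (sub_fact u a) b.
Proof. by apply: subvs_inj; rewrite !vsval_sub_fact factM. Qed.

Definition sub_fmod : fmod A :=
  FMod sub_fact_linl sub_fact_linr sub_fact1 sub_factM.

Lemma vsval_hom : is_hom (vsval : sub_fmod -> X).
Proof. by split=> [c u v | u a]; rewrite ?linearP //= vsval_sub_fact. Qed.

Lemma vsproj_fact x a : x \in U -> vsproj U (fact x a) = fact (vsproj U x : sub_fmod) a.
Proof. by move=> xU; apply: subvs_inj; rewrite /= vsval_sub_fact !vsprojK ?HU. Qed.

Lemma vsproj_hom (Y : fmod A) (h : Y -> X) :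
  is_hom h -> (forall y, h y \in U) -> is_hom (fun y => vsproj U (h y) : sub_fmod).
Proof.
move=> hom_h hU; split=> [c y z | y a]; first by rewrite hom_linear // linearP.
by apply: subvs_inj; rewrite /= vsval_sub_fact !vsprojK ?hU // hom_fact.
Qed.
End Submodule.

(* X / U is realised on the complement U^C: quo_proj x is the U^C-component of x. *)
Section Quotient.
Variables (X : fmod A) (U : {vspace X}).

Definition quo_proj (x : X) : subvs_of U^C := vsproj U^C (x - projv U x).

Lemma vsval_quo_proj x : vsval (quo_proj x) = x - projv U x.
Proof. by rewrite vsprojK // memv_projC. Qed.

Lemma quo_proj_linear : linear quo_proj.
Proof.
move=> c x y; apply: subvs_inj; rewrite linearP /= !vsval_quo_proj linearP /=.
by rewrite scalerBr addrACA opprD.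
Qed.

Lemma quo_proj_eq0 x : (quo_proj x == 0) = (x \in U).
Proof.
rewrite -(inj_eq subvs_inj) vsval_quo_proj linear0 subr_eq0.
by apply/eqP/idP => [-> | /projv_id ->//]; apply: memv_proj.
Qed.

Lemma quo_proj_vsval y : quo_proj (vsval y) = y.
Proof.
apply: subvs_inj; rewrite vsval_quo_proj.
have : vsval y \in lker (projv U) by rewrite lker_proj subvsP.
by rewrite memv_ker => /eqP ->; rewrite subr0.
Qed.

Lemma quo_projB x y : quo_proj (x - y) = quo_proj x - quo_proj y.
Proof. exact: (linearB (linear_of quo_proj_linear)). Qed.

Lemma quo_proj_eq x y : (quo_proj x == quo_proj y) = (x - y \in U).
Proof. by rewrite -subr_eq0 -quo_projB quo_proj_eq0. Qed.

Hypothesis HU : fact_closed U.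

Lemma quo_proj_fact x a : quo_proj (fact (vsval (quo_proj x)) a) = quo_proj (fact x a).
Proof.
apply/eqP; rewrite quo_proj_eq -fmod_actB HU //.
by rewrite vsval_quo_proj addrAC subrr add0r memvN memv_proj.
Qed.

Definition quo_fact (y : subvs_of U^C) (a : A) := quo_proj (fact (vsval y) a).

Lemma quo_fact_linl a c y z : quo_fact (c *: y + z) a = c *: quo_fact y a + quo_fact z a.
Proof. by rewrite /quo_fact linearP fact_linl quo_proj_linear. Qed.

Lemma quo_fact_linr y c a b : quo_fact y (c *: a + b) = c *: quo_fact y a + quo_fact y b.
Proof. by rewrite /quo_fact fact_linr quo_proj_linear. Qed.

Lemma quo_fact1 y : quo_fact y 1 = y.
Proof. by rewrite /quo_fact fact1 quo_proj_vsval. Qed.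

Lemma quo_factM y a b : quo_fact y (a * b) = quo_fact (quo_fact y a) b.
Proof. by rewrite /quo_fact factM quo_proj_fact. Qed.

Definition quo_fmod : fmod A :=
  FMod quo_fact_linl quo_fact_linr quo_fact1 quo_factM.

Lemma quo_proj_hom : is_hom (quo_proj : X -> quo_fmod).
Proof.
by split=> [|x a]; [apply: quo_proj_linear | rewrite /= /quo_fact quo_proj_fact].
Qed.

Lemma quo_proj_surj : surj (quo_proj : X -> quo_fmod).
Proof. by move=> y; exists (vsval y); rewrite quo_proj_vsval. Qed.
End Quotient.

Section RelativeQuotient.
Variables (X : fmod A) (U U' : {vspace X}) (HU : fact_closed U).
Hypothesis sUU' : (U <= U')%VS.

Definition quo_subv : {vspace quo_fmod HU} :=
  (linfun (vsval : subvs_of U^C -> X) @^-1: U')%VS.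

Lemma mem_quo_subv (y : quo_fmod HU) : (y \in quo_subv) = (vsval y \in U').
Proof. by rewrite -memv_preim lfunE. Qed.

Lemma quo_proj_in_subv x : (quo_proj U x \in quo_subv) = (x \in U').
Proof.
have pU' : projv U x \in U' by rewrite (subvP sUU') // memv_proj.
by rewrite mem_quo_subv vsval_quo_proj rpredBr.
Qed.

Lemma quo_proj_vsval_quo_proj x : quo_proj U' (vsval (quo_proj U x)) = quo_proj U' x.
Proof.
apply/eqP; rewrite quo_proj_eq vsval_quo_proj addrAC subrr add0r memvN.
by rewrite (subvP sUU') // memv_proj.
Qed.

Hypothesis HU' : fact_closed U'.

Lemma quo_subv_closed : fact_closed quo_subv.
Proof.
move=> y a; rewrite !mem_quo_subv /= /quo_fact => yU'.
by rewrite vsval_quo_proj memvB ?HU' // (subvP sUU') // memv_proj.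
Qed.

Lemma sub_short_exact :
  short_exact (fun u : sub_fmod HU => vsproj U' (vsval u) : sub_fmod HU')
    (fun u : sub_fmod HU' =>
       vsproj quo_subv (quo_proj U (vsval u)) : sub_fmod quo_subv_closed).
Proof.
have inU' (u : sub_fmod HU) : vsval u \in U' by rewrite (subvP sUU') ?subvsP.
have in_subv (u : sub_fmod HU') : quo_proj U (vsval u) \in quo_subv.
  by rewrite quo_proj_in_subv subvsP.
split.
- exact: vsproj_hom (vsval_hom HU) inU'.
- exact: vsproj_hom (hom_comp (vsval_hom HU') (quo_proj_hom HU)) in_subv.
- by move=> u v /(congr1 vsval); rewrite !vsprojK //; apply: subvs_inj.
- move=> z; have zU' : vsval (vsval z) \in U' by rewrite -mem_quo_subv subvsP.
  by exists (vsproj U' (vsval (vsval z))); rewrite vsprojK // quo_proj_vsval vsvalK.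
move=> u; split=> [/(congr1 vsval) | [v <-]].
  rewrite linear0 vsprojK // => /eqP; rewrite quo_proj_eq0 => uU.
  exists (vsproj U (vsval u)); apply: subvs_inj.
  by rewrite (vsprojK (inU' _)) vsprojK.
apply: subvs_inj; rewrite vsprojK ?in_subv // vsprojK // linear0.
by apply/eqP; rewrite quo_proj_eq0 subvsP.
Qed.

Lemma quo_short_exact :
  short_exact (vsval : sub_fmod quo_subv_closed -> quo_fmod HU)
    (fun y : quo_fmod HU => quo_proj U' (vsval y) : quo_fmod HU').
Proof.
split.
- exact: vsval_hom.
- split=> [c y z | y a]; first by rewrite linearP quo_proj_linear.
  by rewrite /= /quo_fact quo_proj_vsval_quo_proj quo_proj_fact.
- exact: subvs_inj.
- move=> y; exists (quo_proj U (vsval y)).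
  by rewrite quo_proj_vsval_quo_proj quo_proj_vsval.
move=> y; split=> [/eqP | [z <-]].
  by rewrite quo_proj_eq0 -mem_quo_subv => yU'; exists (vsproj _ y); rewrite vsprojK.
by apply/eqP; rewrite quo_proj_eq0 -mem_quo_subv subvsP.
Qed.
End RelativeQuotient.
End Modules.

Lemma orbit_hom (k : fieldType) (A : falgType k) (P0 P1 : fmod A) (f h : P1 -> P0) :
  is_hom f -> aut_orbit f h -> is_hom h.
Proof.
move=> hom_f [a [_ [_ [b' [[hom_a _ _ _] [_ hom_b' _ _] hE]]]]].
exact: eq_is_hom hE (hom_comp (hom_comp hom_b' hom_f) hom_a).
Qed.

Section OrbitClosure.
Import passmx.
Variables (k : fieldType) (A : falgType k) (P0 P1 : fmod A) (V Y : vectType k).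
Variables (Psi : 'Hom(P1, P0) -> V -> Y) (W : {vspace V}).
Hypothesis Psi_linl : forall w, linear (Psi ^~ w).
Hypothesis Psi_linr : forall phi, linear (Psi phi).

Lemma zariski_closure_inj_on (S : (P1 -> P0) -> Prop) g :
  zariski_closure S g ->
  (forall h, S h -> ~ {in W, forall w, Psi (hom_lfun h) w = 0 -> w = 0}) ->
  ~ {in W, forall w, Psi (hom_lfun g) w = 0 -> w = 0}.
Proof.
move=> closure notinj /(row_free_image_basis W (Psi_linr _)) free_g.
pose e1 := vbasis {:P1}; pose e0 := vbasis {:P0}.
pose L u := \matrix_(r < \dim W)
  rVof (vbasis {:Y}) (Psi (hommx e1 e0 (vec_mx u)) (vbasis W)`_r).
have L_linear : linear L.
  move=> c u v; apply/matrixP => r t; rewrite !mxE.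
  by rewrite !linearP /= Psi_linl linearP.
have LE h : L (mxvec (hom_mx h)) =
    \matrix_r rVof (vbasis {:Y}) (Psi (hom_lfun h) (vbasis W)`_r).
  by rewrite /L mxvecK.
have notfree h : S h -> ~~ row_free (L (mxvec (hom_mx h))).
  move=> Sh; rewrite LE; apply/negP => /(row_free_image_basis W (Psi_linr _)).
  exact: notinj.
by have := not_row_free_closure L_linear closure notfree; rewrite LE free_g.
Qed.

Lemma zariski_closure_orbit (Q : (P1 -> P0) -> Prop) f g :
  is_hom f -> is_hom g -> zariski_closure (aut_orbit f) g ->
  (forall h, is_hom h -> Q h <-> {in W, forall w, Psi (hom_lfun h) w = 0 -> w = 0}) ->
  (forall h, aut_orbit f h -> Q h -> Q f) -> Q g -> Q f.
Proof.
move=> hom_f hom_g closure QE Q_orbit Qg; apply: NNPP => notQf.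
apply: (zariski_closure_inj_on closure); last exact/QE.
by move=> h orb_h /(QE _ (orbit_hom hom_f orb_h)) /(Q_orbit _ orb_h).
Qed.
End OrbitClosure.

Section SurjInverse.
Variables (X Y : Type) (p : X -> Y) (surj_p : surj p).

Definition surj_inv (y : Y) : X :=
  proj1_sig (constructive_indefinite_description _ (surj_p y)).

Lemma surj_invK : cancel surj_inv p.
Proof.
by move=> y; rewrite (proj2_sig (constructive_indefinite_description _ (surj_p y))).
Qed.
End SurjInverse.

Section HomSpace.
Variables (k : fieldType) (A : falgType k) (X Y : fmod A).

Lemma is_hom_lfun0 : is_hom (0 : 'Hom(X, Y)).
Proof.
split=> [c x y | x a]; rewrite !zero_lfunE; first by rewrite scaler0 addr0.
by rewrite fmod_act0.
Qed.

Lemma is_hom_lfunP c (v w : 'Hom(X, Y)) :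
  is_hom v -> is_hom w -> is_hom (c *: v + w).
Proof.
move=> hom_v hom_w; split=> [d x y | x a]; first exact: linearP.
by rewrite !add_lfunE !scale_lfunE fact_linl (hom_fact hom_v) (hom_fact hom_w).
Qed.

Definition hom_space : {vspace 'Hom(X, Y)} :=
  vspace_of_pred is_hom_lfun0 is_hom_lfunP.

Lemma mem_hom_space w : w \in hom_space <-> is_hom w.
Proof. exact: mem_vspace_of_pred. Qed.

Lemma hom_lfun_in_space (h : X -> Y) : is_hom h -> hom_lfun h \in hom_space.
Proof.
by move=> hom_h; apply/mem_hom_space/(eq_is_hom (hom_lfunE (hom_linear hom_h))).
Qed.
End HomSpace.

Section Cokernel.
Variables (k : fieldType) (A : falgType k) (P0 P1 X : fmod A).

Definition hom_cok_zero (h : P1 -> P0) : Prop :=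
  forall u : P0 -> X, is_hom u -> (forall x, u (h x) = 0) -> forall y, u y = 0.

Lemma hom_cok_zeroP f C : is_cok f C -> hom_zero C X <-> hom_cok_zero f.
Proof.
move=> [pi [hom_pi surj_pi ker_pi]]; split=> [zeroC u hom_u uf0 | cokf v hom_v c].
  have u_pi y y' : pi y = pi y' -> u y = u y'.
    move=> /eqP; rewrite -subr_eq0 -homB // => /eqP /ker_pi[x fx].
    by apply/eqP; rewrite -subr_eq0 -homB // -fx uf0.
  pose v c := u (surj_inv surj_pi c).
  have hom_v : is_hom v.
    split=> [d c c' | c a]; rewrite /v.
      rewrite -(hom_linear hom_u); apply: u_pi.
      by rewrite (hom_linear hom_pi) !(surj_invK surj_pi).
    transitivity (u (fact (surj_inv surj_pi c) a)); last exact: hom_fact.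
    by apply: u_pi; rewrite (hom_fact hom_pi) !(surj_invK surj_pi).
  move=> y; have -> : u y = v (pi y) by apply: u_pi; rewrite (surj_invK surj_pi).
  exact: zeroC.
rewrite -(surj_invK surj_pi c); apply: (cokf _ (hom_comp hom_pi hom_v)) => x /=.
have /ker_pi -> : exists x', f x' = f x by exists x.
exact: hom0.
Qed.

Lemma cok_exists (f : P1 -> P0) : is_hom f -> exists C, is_cok f C.
Proof.
move=> hom_f; pose I := limg (hom_lfun f).
have memI y : reflect (exists x, f x = y) (y \in I).
  have lin_f := hom_linear hom_f.
  apply: (iffP memv_imgP) => [[x _ ->] | [x <-]]; exists x;
    by rewrite ?memvf ?(hom_lfunE lin_f).
have closedI : fact_closed I.
  by move=> _ a /memI[x <-]; apply/memI; exists (fact x a); rewrite hom_fact.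
exists (quo_fmod closedI), (quo_proj I); split.
- exact: quo_proj_hom.
- exact: quo_proj_surj.
- move=> y; split=> [/eqP | /memI yI]; first by rewrite quo_proj_eq0 => /memI.
  by apply/eqP; rewrite quo_proj_eq0.
Qed.

Lemma hom_cok_zero_orbit (f h : P1 -> P0) :
  aut_orbit f h -> hom_cok_zero h -> hom_cok_zero f.
Proof.
move=> [a [a' [b [b' [[hom_a hom_a' aK _] _ hE]]]]] cokh u hom_u uf0 y.
rewrite -(aK y); apply: (cokh _ (hom_comp hom_a' hom_u)) => x /=.
by rewrite hE aK uf0.
Qed.

Lemma hom_cok_zero_lfun (h : P1 -> P0) : is_hom h ->
  hom_cok_zero h <-> {in hom_space P0 X, forall w, (w \o hom_lfun h)%VF = 0 -> w = 0}.
Proof.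
move=> hom_h; have lin_h := hom_linear hom_h.
split=> [cokh w /mem_hom_space hom_w wh0 | injh u hom_u uh0 y].
  apply/lfunP => y; rewrite zero_lfunE; apply: cokh hom_w _ y => x.
  by rewrite -(hom_lfunE lin_h) -comp_lfunE wh0 zero_lfunE.
have lin_u := hom_linear hom_u.
rewrite -(hom_lfunE lin_u) (injh _ (hom_lfun_in_space hom_u)) ?zero_lfunE //.
by apply/lfunP => x; rewrite comp_lfunE !hom_lfunE // uh0 zero_lfunE.
Qed.

Lemma hom_cok_zero_closure (f g : P1 -> P0) : is_hom f -> is_hom g ->
  zariski_closure (aut_orbit f) g -> hom_cok_zero g -> hom_cok_zero f.
Proof.
have Psi_linl (w : 'Hom(P0, X)) : linear (fun phi : 'Hom(P1, P0) => (w \o phi)%VF).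
  by move=> c phi psi; rewrite comp_lfunDr comp_lfunZr.
have Psi_linr (phi : 'Hom(P1, P0)) : linear (fun w : 'Hom(P0, X) => (w \o phi)%VF).
  by move=> c v w; rewrite comp_lfunDl comp_lfunZl.
move=> hom_f hom_g closure; apply: (zariski_closure_orbit Psi_linl Psi_linr) => //.
- exact: hom_cok_zero_lfun.
- exact: hom_cok_zero_orbit.
Qed.
End Cokernel.

Section HomA.
Variables (k : fieldType) (A : falgType k) (P : fmod A).

Lemma homA_comp (Q : fmod A) (phi : Q -> A) (h : P -> Q) :
  homA phi -> is_hom h -> homA (fun y => phi (h y)).
Proof.
move=> [lin_phi fact_phi] hom_h; split=> [c x y | x a]; first by rewrite hom_linear.
by rewrite hom_fact.
Qed.

Lemma homA_lmul (phi : P -> A) a : homA phi -> homA (fun y => a * phi y).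
Proof.
move=> [lin_phi fact_phi]; split=> [c x y | x b]; last by rewrite fact_phi mulrA.
by rewrite lin_phi mulrDr scalerAr.
Qed.

Lemma homA_lc (phi psi : P -> A) c :
  homA phi -> homA psi -> homA (fun y => c *: phi y + psi y).
Proof.
move=> [lin_phi fact_phi] [lin_psi fact_psi]; split=> [d x y | x a].
  by rewrite lin_phi lin_psi !scalerDr !scalerA mulrC addrACA.
by rewrite fact_phi fact_psi mulrDl scalerAl.
Qed.

Lemma eq_homA (phi psi : P -> A) : phi =1 psi -> homA psi -> homA phi.
Proof. by move=> phi_psi [lin_psi fact_psi]; split=> *; rewrite !phi_psi. Qed.

Lemma homA_lfun0 : homA (0 : 'Hom(P, A)).
Proof. by split=> *; rewrite !zero_lfunE ?scaler0 ?addr0 ?mul0r. Qed.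

Lemma homA_lfunP c (v w : 'Hom(P, A)) : homA v -> homA w -> homA (c *: v + w).
Proof.
move=> homA_v homA_w; apply: eq_homA (homA_lc c homA_v homA_w) => y.
by rewrite add_lfunE scale_lfunE.
Qed.

Definition homA_space : {vspace 'Hom(P, A)} := vspace_of_pred homA_lfun0 homA_lfunP.

Lemma mem_homA_space w : w \in homA_space <-> homA w.
Proof. exact: mem_vspace_of_pred. Qed.
End HomA.

Section NakayamaDual.
Variables (k : fieldType) (A : falgType k) (P N : fmod A).
Variables (pair : N -> (P -> A) -> k) (nuP : nakayama_dual pair).

Lemma pair_linl phi : homA phi -> scalar (pair ^~ phi).
Proof. by case: nuP => lin _ _ _ _ homA_phi c n m; apply: lin. Qed.

Lemma pair_linr n c phi psi : homA phi -> homA psi ->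
  pair n (fun x => c *: phi x + psi x) = c * pair n phi + pair n psi.
Proof. by case: nuP => _ lin _ _ _; apply: lin. Qed.

Lemma pair_fact n a phi : homA phi -> pair (fact n a) phi = pair n (fun x => a * phi x).
Proof. by case: nuP => _ _ act _ _; apply: act. Qed.

Lemma pair0l phi : homA phi -> pair 0 phi = 0.
Proof. by move=> homA_phi; apply: (linear0 (scalar_of (pair_linl homA_phi))). Qed.

Lemma pair_ext n m : (forall phi, homA phi -> pair n phi = pair m phi) -> n = m.
Proof.
case: nuP => _ _ _ inj _ nm; apply/subr0_eq/inj => phi homA_phi.
by rewrite -scaleN1r addrC pair_linl // nm // mulN1r addNr.
Qed.

Section NuMap.
Variables (b : P -> P) (hom_b : is_hom b).

Lemma nu_map_subproof n :
  exists n', forall chi, homA chi -> pair n' chi = pair n (fun y => chi (b y)).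
Proof.
case: nuP => _ _ _ _ repr; apply: repr => c phi psi homA_phi homA_psi.
by rewrite (pair_linr _ _ (homA_comp homA_phi hom_b) (homA_comp homA_psi hom_b)).
Qed.

Definition nu_map n : N :=
  proj1_sig (constructive_indefinite_description _ (nu_map_subproof n)).

Lemma nu_mapP n chi : homA chi -> pair (nu_map n) chi = pair n (fun y => chi (b y)).
Proof. exact: (proj2_sig (constructive_indefinite_description _ (nu_map_subproof n))). Qed.

Lemma nu_map_hom : is_hom nu_map.
Proof.
split=> [c n m | n a]; apply: pair_ext => chi homA_chi;
  have homA_chib := homA_comp homA_chi hom_b.
  by rewrite nu_mapP // !pair_linl // !nu_mapP.
rewrite nu_mapP // pair_fact // (pair_fact _ _ homA_chi) nu_mapP //.
exact: homA_lmul.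
Qed.
End NuMap.
End NakayamaDual.

Section KerNu.
Variables (k : fieldType) (A : falgType k) (P0 P1 X N : fmod A).
Variables (pair : N -> (P1 -> A) -> k) (nuP : nakayama_dual pair).

Definition hom_ker_nu_zero (h : P1 -> P0) : Prop :=
  forall u : X -> N, is_hom u ->
    (forall x phi, homA phi -> pair (u x) (fun y => phi (h y)) = 0) -> forall x, u x = 0.

Section KerNuSub.
Variables (g : P1 -> P0) (hom_g : is_hom g).

Let in_ker_nu n := forall phi : P0 -> A, homA phi -> pair n (fun y => phi (g y)) = 0.

Let in_ker_nu0 : in_ker_nu 0.
Proof. by move=> phi homA_phi; apply: (pair0l nuP (homA_comp homA_phi hom_g)). Qed.

Let in_ker_nuP c n m : in_ker_nu n -> in_ker_nu m -> in_ker_nu (c *: n + m).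
Proof.
move=> kn km phi homA_phi; have homA_phig := homA_comp homA_phi hom_g.
by rewrite (pair_linl nuP) // kn // km // mulr0 addr0.
Qed.

Definition ker_nu_subv : {vspace N} := vspace_of_pred in_ker_nu0 in_ker_nuP.

Lemma ker_nu_closed : fact_closed ker_nu_subv.
Proof.
move=> n a /mem_vspace_of_pred kn; apply/mem_vspace_of_pred => phi homA_phi.
rewrite (pair_fact nuP); first exact: kn _ (homA_lmul a homA_phi).
exact: homA_comp homA_phi hom_g.
Qed.

Lemma is_Knu_sub : is_Knu g (sub_fmod ker_nu_closed).
Proof.
exists N, pair, vsval; split=> //; [exact: vsval_hom | exact: subvs_inj |].
move=> n; split=> [[y <-] | kn]; first by have /mem_vspace_of_pred := subvsP y.
by exists (vsproj ker_nu_subv n); rewrite vsprojK //; apply/mem_vspace_of_pred.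
Qed.

Lemma hom_ker_nu_zero_sub : hom_zero X (sub_fmod ker_nu_closed) -> hom_ker_nu_zero g.
Proof.
move=> zeroK u hom_u ku x.
have kux y : u y \in ker_nu_subv by apply/mem_vspace_of_pred => phi; apply: ku.
have /(congr1 vsval) := zeroK _ (vsproj_hom ker_nu_closed hom_u kux) x.
by rewrite vsprojK // linear0.
Qed.
End KerNuSub.

Lemma hom_zero_of_ker_nu (f : P1 -> P0) (K : fmod A) (iota : K -> N) :
  is_hom iota -> injective iota ->
  (forall n, (exists x, iota x = n) <->
     (forall phi : P0 -> A, homA phi -> pair n (fun x => phi (f x)) = 0)) ->
  hom_ker_nu_zero f -> hom_zero X K.
Proof.
move=> hom_iota inj_iota range_iota kerf h hom_h x; apply: inj_iota; rewrite hom0 //.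
apply: (kerf _ (hom_comp hom_h hom_iota)) => y /=.
by apply/range_iota; exists (h y).
Qed.

Lemma hom_ker_nu_zero_orbit (f h : P1 -> P0) :
  is_hom f -> aut_orbit f h -> hom_ker_nu_zero h -> hom_ker_nu_zero f.
Proof.
move=> hom_f orb_h; have hom_h := orbit_hom hom_f orb_h.
case: orb_h => [a [_ [b [b' [[hom_a _ _ _] [hom_b hom_b' bK _] hE]]]]] kerh u hom_u kuf x.
have nu_b_u0 y : nu_map nuP hom_b (u y) = 0.
  apply: (kerh _ (hom_comp hom_u (nu_map_hom nuP hom_b))) => {}y phi homA_phi /=.
  rewrite (nu_mapP nuP); last exact: homA_comp.
  have -> : (fun z => phi (h (b z))) = (fun z => phi (a (f z))).
    by apply: functional_extensionality => z; rewrite hE bK.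
  exact: kuf _ _ (homA_comp homA_phi hom_a).
apply: (pair_ext nuP) => theta homA_theta; rewrite (pair0l nuP) //.
have -> : theta = (fun z => theta (b' (b z))).
  by apply: functional_extensionality => z; rewrite bK.
have homA_thetab' := homA_comp homA_theta hom_b'.
by have /= <- := nu_mapP nuP hom_b (u x) homA_thetab'; rewrite nu_b_u0 (pair0l nuP).
Qed.

Local Notation H1 := (homA_space P1).
Local Notation H0 := (homA_space P0).

(* pair is only constrained on A-linear maps; composing with the projection onto
   them extends it to a pairing that is bilinear on all k-linear maps. *)
Definition nu_pairing (n : N) (psi : 'Hom(P1, A)) : k := pair n (projv H1 psi).

Lemma homA_projv psi : homA (projv H1 psi).
Proof. exact/mem_homA_space/memv_proj. Qed.

Lemma nu_pairing_linl psi : scalar (nu_pairing ^~ psi).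
Proof. move=> c n m; exact: (pair_linl nuP (homA_projv psi)). Qed.

Lemma nu_pairing_linr n : scalar (nu_pairing n).
Proof.
move=> c psi psi'; rewrite /nu_pairing.
rewrite -(pair_linr nuP _ _ (homA_projv psi) (homA_projv psi')).
congr (pair n); apply: functional_extensionality => y.
by rewrite linearP add_lfunE scale_lfunE.
Qed.

Lemma nu_pairing_comp (h : P1 -> P0) n (psi : 'Hom(P0, A)) : is_hom h -> psi \in H0 ->
  nu_pairing n (psi \o hom_lfun h)%VF = pair n (fun y => psi (h y)).
Proof.
move=> hom_h /mem_homA_space homA_psi.
have psih y : (psi \o hom_lfun h)%VF y = psi (h y).
  by rewrite comp_lfunE (hom_lfunE (hom_linear hom_h)).
rewrite /nu_pairing projv_id; last first.
  by apply/mem_homA_space/(eq_homA psih)/homA_comp.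
by congr (pair n); apply: functional_extensionality.
Qed.

Definition nu_coords (phi : 'Hom(P1, P0)) (w : 'Hom(X, N)) :
    'M[k]_(\dim {:X}, \dim H0) :=
  \matrix_(i, j) nu_pairing (w (vbasis {:X})`_i) ((vbasis H0)`_j \o phi)%VF.

Lemma nu_coords_eq0 (h : P1 -> P0) w : is_hom h ->
  nu_coords (hom_lfun h) w = 0 <->
  forall x phi, homA phi -> pair (w x) (fun y => phi (h y)) = 0.
Proof.
move=> hom_h; have bH0 (j : 'I_(\dim H0)) : (vbasis H0)`_j \in H0.
  by apply/vbasis_mem/mem_nth; rewrite size_tuple.
split=> [/matrixP w0 x phi homA_phi | w0]; last first.
  by apply/matrixP => i j; rewrite !mxE nu_pairing_comp // w0 //; apply/mem_homA_space.
have lin_phi : linear phi by case: homA_phi.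
have phiH0 : lfun_of lin_phi \in H0.
  by apply/mem_homA_space/(eq_homA (lfun_ofE lin_phi)).
have -> : (fun y => phi (h y)) = (fun y => lfun_of lin_phi (h y)).
  by apply: functional_extensionality => y; rewrite lfun_ofE.
have comp_scalar n : scalar (fun psi => nu_pairing n (psi \o hom_lfun h)%VF).
  by move=> c psi psi'; rewrite comp_lfunDl -comp_lfunZl nu_pairing_linr.
rewrite -nu_pairing_comp // (coord_vbasis (memvf x)) linear_sum.
under eq_bigr do rewrite linearZ.
have /= -> := scalar_sum (nu_pairing_linl (lfun_of lin_phi \o hom_lfun h)%VF).
rewrite big1 // => i _; rewrite (coord_vbasis phiH0).
have /= -> := scalar_sum (comp_scalar (w (vbasis fullv)`_i)).
rewrite big1 ?mulr0 // => j _.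
by have := w0 i j; rewrite !mxE => ->; rewrite mulr0.
Qed.

Lemma hom_ker_nu_zero_lfun (h : P1 -> P0) : is_hom h ->
  hom_ker_nu_zero h <->
  {in hom_space X N, forall w, nu_coords (hom_lfun h) w = 0 -> w = 0}.
Proof.
move=> hom_h; split=> [kerh w /mem_hom_space hom_w | injh u hom_u u0 x].
  move=> /(nu_coords_eq0 _ hom_h) w0; apply/lfunP => x.
  by rewrite zero_lfunE; apply: kerh hom_w w0 x.
have lin_u := hom_linear hom_u.
rewrite -(hom_lfunE lin_u x) (injh _ (hom_lfun_in_space hom_u)) ?zero_lfunE //.
by apply/(nu_coords_eq0 _ hom_h) => y phi; rewrite (hom_lfunE lin_u); apply: u0.
Qed.

Lemma hom_ker_nu_zero_closure (f g : P1 -> P0) : is_hom f -> is_hom g ->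
  zariski_closure (aut_orbit f) g -> hom_ker_nu_zero g -> hom_ker_nu_zero f.
Proof.
have Psi_linl w : linear (nu_coords ^~ w).
  move=> c phi psi; apply/matrixP => i j; rewrite !mxE.
  by rewrite comp_lfunDr -comp_lfunZr nu_pairing_linr.
have Psi_linr phi : linear (nu_coords phi).
  move=> c v w; apply/matrixP => i j; rewrite !mxE.
  by rewrite add_lfunE scale_lfunE nu_pairing_linl.
move=> hom_f hom_g closure; apply: (zariski_closure_orbit Psi_linl Psi_linr) => //.
- exact: hom_ker_nu_zero_lfun.
- by move=> h; apply: hom_ker_nu_zero_orbit.
Qed.
End KerNu.

Section TorsionClass.
Variables (k : fieldType) (A : falgType k) (T : fmod A -> Prop).
Hypothesis torT : torsion_class T.

Lemma torsion_class_preimage (C Y : fmod A) (M : {vspace C}) (HM : fact_closed M)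
    (h : Y -> quo_fmod HM) :
  T (sub_fmod HM) -> T Y -> is_hom h ->
  exists M' (HM' : fact_closed M'),
    [/\ (M <= M')%VS, T (sub_fmod HM') & forall y, vsval (h y) \in M'].
Proof.
move=> TM TY hom_h.
pose M' := (lfun_of (quo_proj_linear M) @^-1: limg (hom_lfun h))%VS.
have memM' x : reflect (exists y, quo_proj M x = h y) (x \in M').
  rewrite -memv_preim lfun_ofE; have lin_h := hom_linear hom_h.
  apply: (iffP memv_imgP) => [[y _ ->] | [y ->]]; exists y;
    by rewrite ?memvf ?(hom_lfunE lin_h).
have sMM' : (M <= M')%VS.
  apply/subvP => x xM; apply/memM'; exists 0; rewrite hom0 //.
  by apply/eqP; rewrite quo_proj_eq0.
have hM' y : vsval (h y) \in M' by apply/memM'; exists y; rewrite quo_proj_vsval.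
have HM' : fact_closed M'.
  move=> x a /memM'[y xy]; apply/memM'; exists (fact y a).
  by rewrite (hom_fact (quo_proj_hom HM)) xy hom_fact.
exists M', HM'; split=> //.
apply: torT.2 _ _ _ _ _ (sub_short_exact HM sMM' HM') TM _.
pose HZ := @quo_subv_closed _ _ _ _ _ HM sMM' HM'.
pose q y : sub_fmod HZ := vsproj (quo_subv M' HM) (h y).
apply: (torT.1 _ _ q TY).
  by apply: vsproj_hom => // y; rewrite mem_quo_subv.
move=> z; have /memM'[y zy] : vsval (vsval z) \in M' by rewrite -mem_quo_subv subvsP.
by exists y; apply: subvs_inj; rewrite vsprojK ?mem_quo_subv // -zy quo_proj_vsval.
Qed.

Lemma torsion_class_radical (C : fmod A) : (exists X0, T X0) ->
  exists (M : {vspace C}) (HM : fact_closed M),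
    T (sub_fmod HM) /\ forall Y, T Y -> hom_zero Y (quo_fmod HM).
Proof.
move=> [X0 TX0].
pose good (U : {vspace C}) := exists HU : fact_closed U, T (sub_fmod HU).
have good0 : good 0%VS.
  have H0 : fact_closed (0 : {vspace C})%VS.
    by move=> x a; rewrite !memv0 => /eqP ->; rewrite fmod_act0.
  exists H0; apply: (torT.1 _ _ (fun=> 0) TX0).
    by split=> *; rewrite ?scaler0 ?addr0 ?fmod_act0.
  move=> u; exists 0; apply/subvs_inj; rewrite linear0.
  by apply/esym/eqP; rewrite -memv0 subvsP.
have [M [HM TM] maxM] := ex_max_dim good0.
exists M, HM; split=> // Y TY h hom_h y.
have [M' [HM' [sMM' TM' hM']]] := torsion_class_preimage TM TY hom_h.
have M'M : M' = M.
  apply/eqP; rewrite eq_sym -(dimv_leqif_eq sMM').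
  by rewrite eqn_leq dimvS // maxM //; exists HM'.
by have := hM' y; rewrite M'M -quo_proj_eq0 quo_proj_vsval => /eqP.
Qed.
End TorsionClass.

Section TorsionFreeClass.
Variables (k : fieldType) (A : falgType k) (F : fmod A -> Prop).
Hypothesis tfF : torsionfree_class F.

Lemma torsionfree_class_kernel (K Y : fmod A) (M : {vspace K}) (HM : fact_closed M)
    (h : sub_fmod HM -> Y) :
  F (quo_fmod HM) -> F Y -> is_hom h ->
  exists M' (HM' : fact_closed M'),
    [/\ (M' <= M)%VS, F (quo_fmod HM') & {in M', forall x, h (vsproj M x) = 0}].
Proof.
move=> FM FY hom_h; have lin_h := hom_linear hom_h.
pose M' := (M :&: lker (hom_lfun h \o linfun (vsproj M)))%VS.
have memM' x : (x \in M') = (x \in M) && (h (vsproj M x) == 0).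
  by rewrite memv_cap memv_ker comp_lfunE lfunE /= (hom_lfunE lin_h).
have sM'M : (M' <= M)%VS by apply: capvSl.
have HM' : fact_closed M'.
  move=> x a; rewrite !memM' => /andP[xM /eqP hx0].
  by rewrite HM // vsproj_fact // hom_fact // hx0 fmod_act0 /=.
have M'_ker : {in M', forall x, h (vsproj M x) = 0}.
  by move=> x; rewrite memM' => /andP[_ /eqP].
exists M', HM'; split=> //.
apply: tfF.2 _ _ _ _ _ (quo_short_exact HM' sM'M HM) _ FM.
pose HZ := @quo_subv_closed _ _ _ _ _ HM' sM'M HM.
pose j (z : sub_fmod HZ) := h (vsproj M (vsval (vsval z))).
have inM (z : sub_fmod HZ) : vsval (vsval z) \in M.
  by rewrite -mem_quo_subv subvsP.
have hom_j : is_hom j.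
  split=> [c z z' | z a]; first by rewrite /j !linearP /= lin_h.
  rewrite /j (vsval_sub_fact HZ) /= /quo_fact (vsval_quo_proj M') linearB /= homB //.
  by rewrite (M'_ker _ (memv_proj M' _)) subr0 vsproj_fact ?inM // hom_fact.
apply: (tfF.1 _ _ j FY hom_j); apply: inj_hom => // z /eqP jz0.
have : vsval (vsval z) \in (M' :&: M'^C)%VS by rewrite memv_cap memM' inM jz0 subvsP.
by rewrite capv_compl memv0 => /eqP z0; do 2 apply: subvs_inj; rewrite z0 !linear0.
Qed.

Lemma torsionfree_class_coradical (K : fmod A) : (exists X0, F X0) ->
  exists (M : {vspace K}) (HM : fact_closed M),
    F (quo_fmod HM) /\ forall Y, F Y -> hom_zero (sub_fmod HM) Y.
Proof.
move=> [X0 FX0].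
pose good (U : {vspace K}) := exists HU : fact_closed U, F (quo_fmod HU).
have goodf : good fullv.
  have Hf : fact_closed (fullv : {vspace K}) by move=> *; apply: memvf.
  exists Hf; apply: (tfF.1 _ _ (fun=> 0) FX0).
    by split=> *; rewrite ?scaler0 ?addr0 ?fmod_act0.
  move=> y y' _; apply/eqP; rewrite -(quo_proj_vsval y) -(quo_proj_vsval y').
  by rewrite quo_proj_eq memvf.
have [M [HM FM] minM] := ex_min_dim goodf.
exists M, HM; split=> // Y FY h hom_h u.
have [M' [HM' [sM'M FM' M'_ker]]] := torsionfree_class_kernel FM FY hom_h.
have M'M : M' = M.
  apply/eqP; rewrite -(dimv_leqif_eq sM'M).
  by rewrite eqn_leq dimvS // minM //; exists HM'.
by rewrite -(vsvalK u) M'_ker // M'M subvsP.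
Qed.
End TorsionFreeClass.

Section Inclusions.
Variables (k : fieldType) (A : falgType k) (P0 P1 : fmod A) (f g : P1 -> P0).
Hypotheses (hom_f : is_hom f) (hom_g : is_hom g).
Hypothesis closure : zariski_closure (aut_orbit f) g.

Lemma Fbarf_subset X : Fbarf g X -> Fbarf f X.
Proof.
move=> Fbar_g C cokC; have [Cg cokCg] := cok_exists hom_g.
apply/(hom_cok_zeroP _ cokC)/(hom_cok_zero_closure hom_f hom_g closure).
exact/(hom_cok_zeroP _ cokCg)/Fbar_g.
Qed.

Lemma Tbarf_subset X : Tbarf g X -> Tbarf f X.
Proof.
move=> Tbar_g K [N [pair [iota [nuP hom_iota inj_iota range_iota]]]].
apply: (hom_zero_of_ker_nu hom_iota inj_iota range_iota).
apply: (hom_ker_nu_zero_closure nuP hom_f hom_g closure).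
exact: hom_ker_nu_zero_sub (Tbar_g _ (is_Knu_sub nuP hom_g)).
Qed.

Lemma Tf_subset X : Tf f X -> Tf g X.
Proof.
move=> TfX T torT TCg; apply: TfX => // C cokC.
have [Cg cokCg] := cok_exists hom_g.
have [M [HM [TM homT0]]] := torsion_class_radical torT C (ex_intro _ Cg (TCg _ cokCg)).
have Fbar_gM : Fbarf g (quo_fmod HM) by move=> C' cokC'; apply/homT0/TCg.
have CM x : x \in M.
  by rewrite -quo_proj_eq0 (Fbarf_subset Fbar_gM cokC (quo_proj_hom HM)).
apply: (torT.1 _ _ _ TM (vsval_hom HM)) => x.
by exists (vsproj M x); rewrite vsprojK.
Qed.

Lemma Ff_subset X : Ff f X -> Ff g X.
Proof.
move=> FfX F tfF FKg; apply: FfX => // K Knu_f.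
have [N [pair [_ [nuP _ _ _]]]] := Knu_f.
have Knu_g := is_Knu_sub nuP hom_g.
have [M [HM [FM homF0]]] :=
  torsionfree_class_coradical tfF K (ex_intro _ _ (FKg _ Knu_g)).
have Tbar_gM : Tbarf g (sub_fmod HM) by move=> K' Knu_g'; apply/homF0/FKg.
have M0 x : x \in M -> x = 0.
  by move=> xM; rewrite -(vsprojK xM) (Tbarf_subset Tbar_gM Knu_f (vsval_hom HM)).
apply: (tfF.1 _ _ _ FM (quo_proj_hom HM)).
by apply: inj_hom (quo_proj_hom HM) _ => x /eqP; rewrite quo_proj_eq0 => /M0.
Qed.
End Inclusions.

Theorem proposition3p9 (k : closedFieldType) (A : falgType k)
    (P0 P1 : fmod A) (f g : P1 -> P0) :
  projective P0 -> projective P1 -> is_hom f -> is_hom g ->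
  zariski_closure (aut_orbit f) g ->
  [/\ (forall X, Tf f X -> Tf g X),
      (forall X, Ff f X -> Ff g X),
      (forall X, Tbarf g X -> Tbarf f X),
      (forall X, Fbarf g X -> Fbarf f X) &
      (forall X, Wf g X -> Wf f X)].
Proof.
move=> _ _ hom_f hom_g closure.
have Tbar_sub := Tbarf_subset hom_f hom_g closure.
have Fbar_sub := Fbarf_subset hom_f hom_g closure.
split=> [X | X | // | // | X [/Tbar_sub Tbar_fX /Fbar_sub Fbar_fX] //].
- exact: Tf_subset hom_f hom_g closure X.
- exact: Ff_subset hom_f hom_g closure X.
Qed.
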